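(* For any $t\in(0,1)$ there exists a real symmetric matrix $\mathbf{A}$ of size $\lceil(4t)^{-1}\rceil$ such that, for any positive integers $n_{\mathrm{v}},k$ with $n_{\mathrm{v}}k<(8t)^{-1}$ (i.e. stochastic Lanczos quadrature using fewer than $(8t)^{-1}$ matrix–vector products) and any unit vectors $\mathbf{v}_1,\dots,\mathbf{v}_{n_{\mathrm{v}}}$, the output satisfies $$d_{\mathrm{W}}\Big(\Phi[\mathbf{A}],\tfrac1{n_{\mathrm{v}}}\textstyle\sum_{i=1}^{n_{\mathrm{v}}}\mathrm{GQ}_k(\Psi[\mathbf{A},\mathbf{v}_i])\Big)>t\,I[\mathbf{A}],$$ where $I[\mathbf{A}]=|\lambda_{\max}[\mathbf{A}]-\lambda_{\min}[\mathbf{A}]|$.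
   Context: $\Phi[\mathbf{A}](x)=\frac1n\#\{i:\lambda_i[\mathbf{A}]\le x\}$ is the CESM of an $n\times n$ symmetric $\mathbf{A}$; $\Psi[\mathbf{A},\mathbf{v}](x)=\mathbf{v}^{\mathsf T}\mathbb{1}[\mathbf{A}\le x]\mathbf{v}$ where $\mathbb{1}[\mathbf{A}\le x]$ is the orthogonal projector onto eigenvectors with eigenvalues $\le x$. $\mathrm{GQ}_k(\mu)$ is the $k$-point Gaussian quadrature rule of $\mu$ (the discrete distribution $\sum_{j=1}^k d_j\mathbb{1}[\theta_j\le x]$ whose moments agree with those of $\mu$ up to degree $2k-1$), which for $\mu=\Psi[\mathbf{A},\mathbf{v}]$ is computed from $k$ steps of the Lanczos algorithm (using $k$ matrix–vector products). $d_{\mathrm{W}}(\mu,\nu)=\int|\mu(x)-\nu(x)|\,dx$. *)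

From HB Require Import structures.
From mathcomp Require Import all_boot all_order all_algebra.
From mathcomp Require Import all_classical all_reals.
From mathcomp Require Import ereal measure lebesgue_measure lebesgue_integral.
Set Implicit Arguments. Unset Strict Implicit. Unset Printing Implicit Defensive.
Import Order.TTheory GRing.Theory Num.Theory.
Local Open Scope ring_scope.

Section Defs.
Variable R : realType.

(* Orthogonal eigendecomposition A = Q^T diag(lam) Q, Q orthogonal.
   Row j of Q is a unit eigenvector with eigenvalue lam j. *)
Definition spectral_decomp (N : nat) (A Q : 'M[R]_N) (lam : 'I_N -> R) : Prop :=
  Q *m Q^T = 1%:M /\ A = Q^T *m diag_mx (\row_j lam j) *m Q.

Definition cesm (N : nat) (lam : 'I_N -> R) (x : R) : R :=
  N%:R^-1 * (#|[set i : 'I_N | lam i <= x]|)%:R.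

Definition spec_proj (N : nat) (Q : 'M[R]_N) (lam : 'I_N -> R) (x : R) : 'M[R]_N :=
  Q^T *m diag_mx (\row_j (if lam j <= x then 1 else 0)) *m Q.

Definition wsm (N : nat) (Q : 'M[R]_N) (lam : 'I_N -> R) (v : 'cV[R]_N) (x : R) : R :=
  (v^T *m spec_proj Q lam x *m v) 0 0.

(* Psi[A,v] is the discrete distribution with atoms lam j of mass ((Q v)_j)^2;
   its p-th moment \int x^p dPsi[A,v](x) is *)
Definition wsm_moment (N : nat) (Q : 'M[R]_N) (lam : 'I_N -> R) (v : 'cV[R]_N)
    (p : nat) : R :=
  \sum_(j < N) ((Q *m v) j 0) ^+ 2 * lam j ^+ p.

Definition disc_cdf (k : nat) (theta d : 'I_k -> R) (x : R) : R :=
  \sum_(j < k) (if theta j <= x then d j else 0).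

Definition disc_moment (k : nat) (theta d : 'I_k -> R) (p : nat) : R :=
  \sum_(j < k) d j * theta j ^+ p.

(* (theta, d) is the k-point Gaussian quadrature rule GQ_k(Psi[A,v]):
   a k-point rule whose moments agree with those of Psi[A,v] up to degree 2k-1. *)
Definition is_GQ_wsm (N k : nat) (Q : 'M[R]_N) (lam : 'I_N -> R) (v : 'cV[R]_N)
    (theta d : 'I_k -> R) : Prop :=
  forall p : nat, (p <= 2 * k - 1)%N -> disc_moment theta d p = wsm_moment Q lam v p.

(* I[A] = |lambda_max - lambda_min| = max_{i,j} |lambda_i - lambda_j| *)
Definition spread (N : nat) (lam : 'I_N -> R) : R :=
  \big[Num.max/0]_(i < N) \big[Num.max/0]_(j < N) `|lam i - lam j|.

Definition unit_vec (N : nat) (v : 'cV[R]_N) : Prop :=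
  \sum_(j < N) (v j 0) ^+ 2 = 1.

(* Wasserstein distance d_W(mu,nu) = \int_R |mu(x) - nu(x)| dx (Lebesgue) *)
Definition dW (F G : R -> R) : \bar R :=
  (\int[@lebesgue_measure R]_(x in [set: R]) (`|F x - G x|)%:E)%E.

End Defs.

From HB Require Import structures.
From mathcomp Require Import all_boot all_order all_algebra.
From mathcomp Require Import all_classical all_reals.
From mathcomp Require Import ereal measure lebesgue_measure lebesgue_integral.
From mathcomp Require Import measurable_realfun.
From mathcomp Require Import ring lra.
Set Implicit Arguments. Unset Strict Implicit. Unset Printing Implicit Defensive.
Import Order.TTheory GRing.Theory Num.Theory.
Local Open Scope ring_scope.

(* The CESM of A = diag(1, ..., N) jumps by 1/N at each of its N eigenvalues,
   whereas the averaged quadrature output is a step function with at most nv k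
   atoms.  At least N - nv k eigenvalues have no atom within distance 1/2; on that
   window the output is constant while the CESM jumps by 1/N, so the window
   contributes at least 1/(2N) to the Wasserstein distance.  Hence
   d_W >= (N - nv k)/(2N) > 1/4 > t (N - 1) = t I[A], because nv k < N/2 and
   N - 1 < 1/(4t). *)

Lemma card_unhit_ge (I T : finType) (P : I -> T -> bool) :
  (forall i i' l, P i l -> P i' l -> i = i') ->
  (#|I| - #|T| <= #|[set i | [forall l, ~~ P i l]]|)%N.
Proof.
move=> uniqP; set unhit := [set i | _].
pose hit l := [pick i | P i l].
have hitE i l : P i l -> hit l = Some i.
  move=> Pil; rewrite /hit; case: pickP => [i' Pi'l|/(_ i)]; last by rewrite Pil.
  by rewrite (uniqP _ _ _ Pil Pi'l).
have hit_sub : [set Some i | i in ~: unhit] \subset hit @: [set: T].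
  apply/fintype.subsetP => _ /imsetP[i + ->]; rewrite !inE => /forallPn[l].
  by rewrite negbK => /hitE <-; rewrite imset_f.
have := leq_trans (subset_leq_card hit_sub) (leq_imset_card _ _).
rewrite card_imset ?cardsT; last exact: Some_inj.
by rewrite leq_subLR -(cardsC unhit) addnC leq_add2r.
Qed.

Section SpectralDiag.
Variables (R : realType) (N : nat) (d : 'I_N -> R) (Q : 'M[R]_N) (lam : 'I_N -> R).
Hypothesis QD : spectral_decomp (diag_mx (\row_i d i)) Q lam.

Lemma spectral_decomp_rows_orthonormal (a b : 'I_N) :
  \sum_i Q a i * Q b i = (a == b)%:R.
Proof.
have /matrixP/(_ a b) := QD.1; rewrite !mxE => <-.
by apply: eq_bigr => i _; rewrite mxE.
Qed.

Lemma spectral_decomp_diag_support (j i : 'I_N) : Q j i != 0 -> lam j = d i.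
Proof.
have /matrixP/(_ j i) : Q *m diag_mx (\row_i d i) = diag_mx (\row_j lam j) *m Q.
  by rewrite QD.2 !mulmxA QD.1 mul1mx.
rewrite mul_mx_diag mul_diag_mx !mxE => eig Qji.
by apply: (mulIf Qji); rewrite -eig mulrC.
Qed.

Lemma spectral_decomp_row_neq0 (j : 'I_N) : exists i, Q j i != 0.
Proof.
apply/existsP; apply: contraT; rewrite negb_exists => /forallP Qj0.
have := spectral_decomp_rows_orthonormal j j; rewrite eqxx big1 => [/eqP|i _].
  by rewrite eq_sym oner_eq0.
by have /negPn/eqP -> := Qj0 i; rewrite mul0r.
Qed.

Lemma spectral_decomp_diag_eigenvalues :
  injective d -> exists2 f : 'I_N -> 'I_N, injective f & forall j, lam j = d (f j).
Proof.
move=> d_inj; pose f j := odflt j [pick i | Q j i != 0].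
have Qf j : Q j (f j) != 0.
  rewrite /f; case: pickP => [//|Qj0] /=.
  by have [i] := spectral_decomp_row_neq0 j; rewrite Qj0.
have supp_f j i : Q j i != 0 -> i = f j.
  move=> Qji; apply: d_inj.
  by rewrite -(spectral_decomp_diag_support Qji) -(spectral_decomp_diag_support (Qf j)).
exists f => [a b fab|j]; last exact/spectral_decomp_diag_support/Qf.
apply/eqP; apply: contraT => neq_ab.
have := spectral_decomp_rows_orthonormal a b; rewrite (negbTE neq_ab).
rewrite (bigD1 (f a)) //= big1 ?addr0 => [/eqP|i ne_ifa].
  by rewrite mulf_eq0 (negbTE (Qf a)) fab (negbTE (Qf b)).
have [->|/supp_f eq_ifa] := eqVneq (Q a i) 0; first by rewrite mul0r.
by rewrite eq_ifa eqxx in ne_ifa.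
Qed.

End SpectralDiag.

Section StepFunctions.
Variable R : realType.

Lemma measurable_step (a c : R) :
  measurable_fun setT (fun x : R => if a <= x then c else 0).
Proof.
have -> : (fun x : R => if a <= x then c else 0) =
          cst c \* (fun x : R => if a <= x then 1 else 0).
  by apply/funext => x /=; case: ifP; rewrite ?mulr1 ?mulr0.
apply: measurable_funM; first exact: measurable_cst.
apply: nondecreasing_measurable => // x y le_xy.
by case: ifP => [ax|_]; [rewrite (le_trans ax le_xy) | case: ifP].
Qed.

Lemma measurable_disc_cdf (k : nat) (theta d : 'I_k -> R) :
  measurable_fun setT (disc_cdf theta d).
Proof. by apply: measurable_sum => j; apply: measurable_step. Qed.

Lemma disc_cdf_ext (k : nat) (theta d : 'I_k -> R) (x y : R) :
  (forall j, (theta j <= x) = (theta j <= y)) -> disc_cdf theta d x = disc_cdf theta d y.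
Proof. by move=> eq_xy; apply: eq_bigr => j _; rewrite eq_xy. Qed.

End StepFunctions.

Section CESM.
Variables (R : realType) (N : nat) (lam : 'I_N -> R).

Lemma cesm_ext (x y : R) :
  (forall i, (lam i <= x) = (lam i <= y)) -> cesm lam x = cesm lam y.
Proof.
by move=> eq_xy; rewrite /cesm; congr (_ * _%:R); apply: eq_card => i; rewrite !inE eq_xy.
Qed.

Lemma measurable_cesm : measurable_fun setT (cesm lam).
Proof.
apply: nondecreasing_measurable => // x y le_xy.
rewrite /cesm ler_wpM2l ?invr_ge0 ?ler0n // ler_nat.
by apply/subset_leq_card/fintype.subsetP => i; rewrite !inE => /le_trans; apply.
Qed.

Variable delta : R.
Hypothesis lam_sep : forall a b, a != b -> delta <= `|lam a - lam b|.

Lemma cesm_right_of_eigenvalue (j : 'I_N) (x : R) :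
  lam j <= x < lam j + delta -> cesm lam x = cesm lam (lam j).
Proof.
move=> /andP[x_ge x_lt]; apply: cesm_ext => i.
have [->|/lam_sep] := eqVneq i j; first by rewrite lexx; apply/idP; lra.
by rewrite ler_normr => /orP[] ?; apply/idP/idP => ?; lra.
Qed.

Lemma cesm_left_of_eigenvalue (j : 'I_N) (x : R) :
  lam j - delta <= x < lam j -> cesm lam x = cesm lam (lam j) - N%:R^-1.
Proof.
move=> /andP[x_ge x_lt]; rewrite /cesm.
have -> : [set i | lam i <= x] = [set i | lam i <= lam j] :\ j.
  apply/setP => i; rewrite !inE; have [->|ne_ij] := eqVneq i j.
    by apply/negbTE; rewrite -ltNge.
  move/lam_sep: ne_ij; rewrite ler_normr => /orP[] ?; apply/idP/idP => ?; lra.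
rewrite [in RHS](cardsD1 j) inE lexx add1n -addn1 natrD; ring.
Qed.

End CESM.

Section JumpWindow.
Variable R : realType.
Local Open Scope classical_set_scope.

Lemma integral_jump_window_ge (F G : R -> R) (a u c h g : R) :
  0 < u -> measurable_fun setT F -> measurable_fun setT G ->
  (forall x, a - u <= x < a -> F x = c - h) ->
  (forall x, a <= x < a + u -> F x = c) ->
  (forall x, a - u <= x < a + u -> G x = g) ->
  ((u * `|h|)%:E <= \int[lebesgue_measure]_(x in `[(a - u)%R, (a + u)%R[) (`|F x - G x|)%:E)%E.
Proof.
move=> u0 mF mG F_left F_right G_win.
have mFG : measurable_fun setT (fun x => (`|F x - G x|)%:E).
  by apply/measurable_EFinP/measurableT_comp/measurable_funB.
have -> : `[a - u, a + u[ = `[a - u, a[ `|` `[a, a + u[.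
  by apply: itv_bndbnd_setU; rewrite bnd_simp; lra.
rewrite ge0_integral_setU //=; first last.
- rewrite disj_set2E; apply/eqP/seteqP; split => x //=.
  by rewrite !in_itv /= => -[/andP[? ?] /andP[? ?]]; lra.
- exact: measurable_funS mFG.
rewrite (eq_integral (cst (`|c - h - g|)%:E)) => [|x]; last first.
  by rewrite inE /= in_itv /= => win; rewrite F_left // G_win //; lra.
rewrite [X in (_ <= _ + X)%E](eq_integral (cst (`|c - g|)%:E)) => [|x]; last first.
  by rewrite inE /= in_itv /= => win; rewrite F_right // G_win //; lra.
have len_co b b' : b < b' -> lebesgue_measure (`[b, b'[ : set R) = (b' - b)%:E.
  by move=> lt_bb'; rewrite lebesgue_measure_itv /= lte_fin lt_bb' EFinB.
rewrite !integral_cst; try exact: measurable_itv.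
rewrite [X in (_ <= _ * X + _)%E](_ : _ = u%:E); last first.
  by apply: etrans (len_co _ _ _) _; [lra | congr EFin; ring].
rewrite [X in (_ <= _ + _ * X)%E](_ : _ = u%:E); last first.
  by apply: etrans (len_co _ _ _) _; [lra | congr EFin; ring].
rewrite -!EFinM -EFinD lee_fin -mulrDl mulrC ler_wpM2r ?(ltW u0) // addrC.
have tri := ler_normB (c - g) (c - h - g).
by rewrite (_ : c - g - (c - h - g) = h) in tri; last ring.
Qed.

Lemma ge0_sum_integral_le_integral (I : eqType) (W : I -> set R) (s : seq I) (f : R -> \bar R) :
  (forall i, measurable (W i)) -> uniq s -> trivIset [set` s] W ->
  measurable_fun setT f -> (forall x, (0 <= f x)%E) ->
  (\sum_(i <- s) \int[lebesgue_measure]_(x in W i) f x <=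
   \int[lebesgue_measure]_(x in setT) f x)%E.
Proof.
move=> mW s_uniq W_disj mf f_ge0.
rewrite -ge0_integral_bigsetU //; last exact: measurable_funS mf.
by apply: ge0_subset_integral => //; apply: bigsetU_measurable => i _; apply: mW.
Qed.

End JumpWindow.

Section CesmLowerBound.
Variables (R : realType) (N : nat) (lam : 'I_N -> R) (delta : R).
Hypotheses (delta_gt0 : 0 < delta)
  (lam_sep : forall a b, a != b -> delta <= `|lam a - lam b|).

Lemma integral_cesm_window_ge (G : R -> R) (j : 'I_N) :
  measurable_fun setT G ->
  (forall x, lam j - delta / 2 <= x < lam j + delta / 2 -> G x = G (lam j)) ->
  ((delta / 2 / N%:R)%:E <=
   \int[lebesgue_measure]_(x in [set` `[lam j - delta / 2, lam j + delta / 2[%R]%classic)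
     (`|cesm lam x - G x|)%:E)%E.
Proof.
move=> mG G_win; rewrite -[N%:R^-1]ger0_norm ?invr_ge0 ?ler0n //.
apply: (integral_jump_window_ge (c := cesm lam (lam j)) (g := G (lam j))) => //.
- by rewrite divr_gt0.
- exact: measurable_cesm.
- move=> x /andP[? ?]; apply: (cesm_left_of_eigenvalue lam_sep).
  by apply/andP; split; lra.
- move=> x /andP[? ?]; apply: (cesm_right_of_eigenvalue lam_sep).
  by apply/andP; split; lra.
Qed.

Lemma dW_cesm_ge (T : finType) (th : T -> R) (G : R -> R) :
  measurable_fun setT G ->
  (forall x y, (forall l, (th l <= x) = (th l <= y)) -> G x = G y) ->
  (((N - #|T|)%:R * delta / (2 * N%:R))%:E <= dW (cesm lam) G)%E.
Proof.
move=> mG G_ext.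
pose win j : interval R := `[lam j - delta / 2, lam j + delta / 2[%R.
have win_uniq j j' x : x \in win j -> x \in win j' -> j = j'.
  rewrite !in_itv /= => /andP[? ?] /andP[? ?]; apply/eqP; apply: contraT.
  by move/lam_sep; rewrite ler_normr => /orP[] ?; lra.
pose unhit := [set j | [forall l, ~~ (th l \in win j)]].
have unhit_ge : (N - #|T| <= #|unhit|)%N.
  have := card_unhit_ge (fun j j' l => @win_uniq j j' (th l)).
  by rewrite card_ord; apply.
have win_ge j : j \in unhit -> ((delta / 2 / N%:R)%:E <=
    \int[lebesgue_measure]_(x in [set` win j]%classic) (`|cesm lam x - G x|)%:E)%E.
  rewrite inE => /forallP unhit_j; apply: integral_cesm_window_ge => // x /andP[? ?].
  apply: G_ext => l; move: (unhit_j l); rewrite in_itv /= negb_and -ltNge -leNgt.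
  by case/orP => ?; apply/idP/idP => ?; lra.
rewrite /dW; apply: le_trans (ge0_sum_integral_le_integral (W := fun j => [set` win j]%classic)
  (s := enum unhit) _ (enum_uniq _) _ _ _); first last.
- by move=> x; rewrite lee_fin.
- by apply/measurable_EFinP/measurableT_comp/measurable_funB => //; apply: measurable_cesm.
- by move=> i j _ _ [x [? ?]]; apply: (win_uniq _ _ x).
- by move=> j; apply: measurable_itv.
rewrite big_enum /=.
apply: (@le_trans _ _ (\sum_(j in unhit) (delta / 2 / N%:R)%:E)%E); last exact: lee_sum.
rewrite sumEFin sumr_const lee_fin -[leRHS]mulr_natl.
have -> : (N - #|T|)%:R * delta / (2 * N%:R) = (N - #|T|)%:R * (delta / 2 / N%:R).
  by rewrite invfM; ring.
by rewrite ler_wpM2r ?ler_nat // divr_ge0 ?ler0n ?divr_ge0 ?ltW.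
Qed.

Lemma dW_cesm_avg_disc_cdf_ge (nv k : nat) (theta d : 'I_nv -> 'I_k -> R) :
  (((N - nv * k)%:R * delta / (2 * N%:R))%:E <=
   dW (cesm lam) (fun x => (nv%:R^-1 * \sum_(i < nv) disc_cdf (theta i) (d i) x)%R))%E.
Proof.
set G := fun x => _.
have mG : measurable_fun setT G.
  apply: measurable_funM => //; apply: measurable_sum => i.
  exact: measurable_disc_cdf.
have G_ext x y : (forall l : 'I_nv * 'I_k, (theta l.1 l.2 <= x) = (theta l.1 l.2 <= y)) ->
    G x = G y.
  move=> eq_xy; congr (_ * _); apply: eq_bigr => i _.
  by apply: disc_cdf_ext => j; apply: (eq_xy (i, j)).
by have := dW_cesm_ge mG G_ext; rewrite card_prod !card_ord.
Qed.

End CesmLowerBound.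

Section DiagonalSpectrum.
Variables (R : realType) (N : nat).

Lemma spectral_decomp_diag (d : 'I_N -> R) : spectral_decomp (diag_mx (\row_i d i)) 1%:M d.
Proof. by split; rewrite trmx1 ?mul1mx ?mulmx1. Qed.

Lemma spread_le (lam : 'I_N -> R) (lo hi : R) :
  lo <= hi -> (forall i, lo <= lam i <= hi) -> spread lam <= hi - lo.
Proof.
move=> le_lohi lam_in; apply: bigmax_le => [|i _]; first lra.
apply: bigmax_le => [|j _]; first lra.
move: (lam_in i) (lam_in j) => /andP[? ?] /andP[? ?].
by rewrite ler_norml; apply/andP; split; lra.
Qed.

Variables (Q : 'M[R]_N) (lam : 'I_N -> R).
Hypothesis QD : spectral_decomp (diag_mx (\row_(i < N) i.+1%:R)) Q lam.

Let lam_succ : exists2 f : 'I_N -> 'I_N, injective f & forall j, lam j = (f j).+1%:R.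
Proof.
apply: (spectral_decomp_diag_eigenvalues QD) => i j /eqP.
by rewrite eqr_nat eqSS => /eqP/val_inj.
Qed.

Lemma diag_succ_eigen_sep (a b : 'I_N) : a != b -> 1 <= `|lam a - lam b|.
Proof.
have [f f_inj lamE] := lam_succ; move=> ne_ab.
rewrite !lamE; apply: norm_intr_ge1; first by rewrite rpredB ?natr_int.
by rewrite subr_eq0 eqr_nat eqSS; apply: contra ne_ab => /eqP/val_inj/f_inj ->.
Qed.

Lemma diag_succ_spread : (0 < N)%N -> spread lam <= N%:R - 1.
Proof.
have [f _ lamE] := lam_succ; move=> N_gt0.
apply: spread_le => [|j]; first by rewrite ler1n.
by rewrite lamE ler1n ler_nat ltn_ord.
Qed.

End DiagonalSpectrum.

Lemma ceil_inv_gap (R : realType) (t : R) (N M : nat) :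
  0 < t -> N%:Z = Num.ceil (4 * t)^-1 -> M%:R < (8 * t)^-1 ->
  t * (N%:R - 1) < (N - M)%:R / (2 * N%:R).
Proof.
move=> t_gt0 NZ M_lt; set x := (4 * t)^-1 in NZ.
have NR : N%:R = (Num.ceil x)%:~R :> R by rewrite -NZ.
have x_le_N : x <= N%:R by rewrite NR ceil_ge.
have N_lt : N%:R - 1 < x by rewrite NR -(intrB _ _ 1) ceilB1_lt.
have x_gt0 : 0 < x by rewrite invr_gt0 mulr_gt0.
have t_neq0 : t != 0 by rewrite gt_eqF.
have tx : t * x = 4^-1 by rewrite /x; field; rewrite t_neq0.
have inv8t : (8 * t)^-1 = x / 2 by rewrite /x; field; rewrite t_neq0.
rewrite inv8t in M_lt.
have M_le : (M <= N)%N by rewrite -(ler_nat R); lra.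
have lt_quarter : t * (N%:R - 1) < 4^-1 by rewrite -tx ltr_pM2l.
rewrite natrB // ltr_pdivlMr; nra.
Qed.

Theorem theorem4 (R : realType) (t : R) :
  0 < t < 1 ->
  exists (N : nat) (A : 'M[R]_N),
    [/\ N%:Z = Num.ceil (4 * t)^-1,
        A^T = A,
        (exists (Q : 'M[R]_N) (lam : 'I_N -> R), spectral_decomp A Q lam) &
        forall (Q : 'M[R]_N) (lam : 'I_N -> R), spectral_decomp A Q lam ->
        forall (nv k : nat), (0 < nv)%N -> (0 < k)%N ->
          (nv * k)%:R < (8 * t)^-1 ->
        forall v : 'I_nv -> 'cV[R]_N, (forall i, unit_vec (v i)) ->
        forall theta d : 'I_nv -> 'I_k -> R,
          (forall i, is_GQ_wsm Q lam (v i) (theta i) (d i)) ->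
          ((t * spread lam)%:E <
             dW (cesm lam)
                (fun x => (nv%:R^-1 * \sum_(i < nv) disc_cdf (theta i) (d i) x)%R))%E].
Proof.
move=> /andP[t_gt0 _].
have ceil_pos : 0 < Num.ceil (4 * t)^-1 by rewrite ceil_gt0 invr_gt0 mulr_gt0.
have [N NZ] : exists N : nat, N%:Z = Num.ceil (4 * t)^-1.
  by exists `|Num.ceil (4 * t)^-1|%N; rewrite gez0_abs // ltW.
have N_gt0 : (0 < N)%N by rewrite -(ltz_nat 0) NZ.
exists N, (diag_mx (\row_(i < N) i.+1%:R)); split => //.
- exact: tr_diag_mx.
- by exists 1%:M, (fun i : 'I_N => i.+1%:R); apply: spectral_decomp_diag.
move=> Q lam QD nv k _ _ nvk_lt v _ theta d _.
apply: lt_le_trans (dW_cesm_avg_disc_cdf_ge ltr01 (diag_succ_eigen_sep QD) theta d).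
rewrite lte_fin mulr1; apply: le_lt_trans _ (ceil_inv_gap t_gt0 NZ nvk_lt).
by rewrite ler_wpM2l ?(ltW t_gt0) // (diag_succ_spread QD).
Qed.
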